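(* Let $C\subseteq\mathbb{F}_2^n$ be a code, $x\in C$ and $y\in\mathbb{F}_2^n$. Then $D_C(y)=x$ provided that one of the following holds: (1) $\delta(y,x)<\frac{\delta(C)+(\omega^{\mathrm{H}}(y)-\omega^{\mathrm{H}}(x))(\gamma-1)}{2}$, or (2) $\delta(y,x)<\frac{\hat\delta(C)+\omega^{\mathrm{H}}(y)(\gamma-1)}{2}$.
   Context: Let $n\ge2$ and fix reals $0<p\le q<1/2$. Let $\mathbb{P}^n(y\mid x)=\prod_{i=1}^n\mathbb{P}(y_i\mid x_i)$ where $\mathbb{P}(1\mid0)=p$, $\mathbb{P}(0\mid0)=1-p$, $\mathbb{P}(0\mid1)=q$, $\mathbb{P}(1\mid1)=1-q$. Let $\gamma:=\log_{q/(1-p)}\left(\frac{p}{1-q}\right)$. For $x\in\mathbb{F}_2^n$, $\omega^{\mathrm{H}}(x)=|\{i:x_i=1\}|$; for $a,b\in\{0,1\}$, $d_{ab}(y,x)=|\{i: y_i=a,\ x_i=b\}|$. Discrepancy: $\delta(y,x):=\gamma\,d_{10}(y,x)+d_{01}(y,x)$; symmetric discrepancy: $\hat\delta(y,x):=\delta(y,x)-\omega^{\mathrm{H}}(y)(\gamma-1)$. A code is a subset $C\subseteq\mathbb{F}_2^n$ with $|C|\ge2$; its minimum discrepancy is $\delta(C)=\min\{\delta(x,x'):x,x'\in C,\ x\ne x'\}$ and its minimum symmetric discrepancy is $\hat\delta(C)=\min\{\hat\delta(x,x'):x,x'\in C,\ x\ne x'\}$. The maximum likelihood decoder $D_C:\mathbb{F}_2^n\to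 C\cup\{\mathbf f\}$ sends $y$ to $x$ if $x$ is the unique codeword maximizing $\mathbb{P}^n(y\mid x)$, and to a failure symbol $\mathbf f\notin\mathbb{F}_2^n$ otherwise. *)

From mathcomp Require Import all_boot all_order all_algebra.
From mathcomp Require Import reals exp.
Set Implicit Arguments. Unset Strict Implicit. Unset Printing Implicit Defensive.
Import Order.TTheory GRing.Theory Num.Theory.
Local Open Scope ring_scope.

(* Words of F_2^n, with F_2 represented by bool (true = 1). *)
Definition word (n : nat) := {ffun 'I_n -> bool}.

Section Channel.
Variables (R : realType) (p q : R) (n : nat).

(* single-letter channel: chan b a = P(b | a) *)
Definition chan (b a : bool) : R :=
  match a, b with
  | false, true => p
  | false, false => 1 - p
  | true, false => q
  | true, true => 1 - q
  end.

Definition Pn (y x : word n) : R := \prod_(i < n) chan (y i) (x i).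

(* gamma = log_{q/(1-p)} (p/(1-q)) *)
Definition gamma : R := ln (p / (1 - q)) / ln (q / (1 - p)).

Definition wH (x : word n) : nat := #|[set i | x i]|.

Definition dab (a b : bool) (y x : word n) : nat :=
  #|[set i | (y i == a) && (x i == b)]|.

Definition delta (y x : word n) : R :=
  gamma * (dab true false y x)%:R + (dab false true y x)%:R.

Definition sdelta (y x : word n) : R :=
  delta y x - (wH y)%:R * (gamma - 1).

(* minimum of f over pairs of distinct codewords of C (0 if there are none) *)
Definition minpair (C : {set word n}) (f : word n -> word n -> R) : R :=
  match [pick xx : word n * word n | [&& xx.1 \in C, xx.2 \in C & xx.1 != xx.2]] with
  | Some xx0 =>
      \big[Num.min/f xx0.1 xx0.2]_(xx : word n * word n |
             [&& xx.1 \in C, xx.2 \in C & xx.1 != xx.2]) f xx.1 xx.2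
  | None => 0
  end.

Definition delta_code (C : {set word n}) : R := minpair C delta.
Definition sdelta_code (C : {set word n}) : R := minpair C sdelta.

(* maximum likelihood decoder; None is the failure symbol f *)
Definition ML_maximizers (C : {set word n}) (y : word n) : {set word n} :=
  [set x in C | [forall x' in C, Pn y x' <= Pn y x]].

Definition ML_decode (C : {set word n}) (y : word n) : option (word n) :=
  if #|ML_maximizers C y| == 1%N then [pick x in ML_maximizers C y] else None.

End Channel.

From mathcomp Require Import all_boot all_order all_algebra.
From mathcomp Require Import reals exp.
From mathcomp Require Import sequences lra.
Import Order.TTheory GRing.Theory Num.Theory.
Local Open Scope ring_scope.
Set Implicit Arguments. Unset Strict Implicit.

(* Write A := ln (q/(1-p)) < 0.  Letterwise, the channel satisfies
   P(b | a) = P(b | b) * exp (A * d(b,a)), where d is the single-letter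
   discrepancy (gamma for 1|0, 1 for 0|1, 0 otherwise), since A * gamma =
   ln (p/(1-q)).  Multiplying over the n letters gives
   P^n(y | x) = P^n(y | y) * exp (A * delta(y,x)), so a strictly smaller
   discrepancy means a strictly larger likelihood.

   A letterwise case analysis gives the triangle-type inequality
     delta(x,x') + (wH y - wH x)(gamma - 1) <= delta(y,x) + delta(y,x').
   Bounding delta(x,x') below by delta(C) (resp. sdelta(x,x') by sdelta(C)),
   either hypothesis (1) or (2) yields delta(y,x) < delta(y,x') for every
   other codeword x', so x is the unique maximiser of the likelihood and the
   maximum likelihood decoder returns it. *)

Definition ldelta (R : realType) (g : R) (b a : bool) : R :=
  if b then (if a then 0 else g) else (if a then 1 else 0).

Lemma ldelta_triangle (R : realType) (g : R) (b a a' : bool) : -1 <= g ->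
  ldelta g a a' + (b%:R - a%:R) * (g - 1) <= ldelta g b a + ldelta g b a'.
Proof. by move=> hg; rewrite /ldelta; case: a; case: a'; case: b => /=; lra. Qed.

Lemma card_setE (R : realType) (n : nat) (P : pred 'I_n) :
  (#|[set i | P i]|)%:R = \sum_i (P i)%:R :> R.
Proof.
rewrite -sum1_card natr_sum big_mkcond /=; apply: eq_bigr => i _.
by rewrite inE; case: (P i).
Qed.

Lemma ratio_in_01 (R : realFieldType) (a b : R) : 0 < a -> a < b -> 0 < a / b < 1.
Proof.
move=> ha hab; have hb : 0 < b by exact: lt_trans hab.
by rewrite divr_gt0 //= ltr_pdivrMr // mul1r.
Qed.

Lemma minpair_le (R : realType) (n : nat) (C : {set word n})
    (f : word n -> word n -> R) (x1 x2 : word n) :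
  x1 \in C -> x2 \in C -> x1 != x2 -> minpair C f <= f x1 x2.
Proof.
move=> h1 h2 h12; rewrite /minpair.
case: pickP => [xx0 _|/(_ (x1, x2))]; last by rewrite /= h1 h2 h12.
have := @bigmin_le_cond _ _ _ (f xx0.1 xx0.2) (x1, x2)
   (fun xx : word n * word n => [&& xx.1 \in C, xx.2 \in C & xx.1 != xx.2])
   (fun xx => f xx.1 xx.2).
by rewrite /= h1 h2 h12 => /(_ isT).
Qed.

Section Channel.
Variables (R : realType) (p q : R) (n : nat).
Hypotheses (hp : 0 < p) (hpq : p <= q) (hq : q < 1 / 2).

Local Notation A := (ln (q / (1 - p))).
Local Notation B := (ln (p / (1 - q))).

Lemma param_bounds : [/\ 0 < q, 0 < 1 - p, 0 < 1 - q, q < 1 - p & p < 1 - q].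
Proof. by move: hp hpq hq => *; split; lra. Qed.

Lemma ratios_in_01 : (0 < q / (1 - p) < 1) && (0 < p / (1 - q) < 1).
Proof. by have [? ? ? ? ?] := param_bounds; rewrite !ratio_in_01. Qed.

Lemma A_lt0 : A < 0.
Proof. by case/andP: ratios_in_01 => *; exact: ln_lt0. Qed.

(* gamma is a quotient of two negative logarithms. *)
Lemma gamma_gt0 : 0 < gamma p q.
Proof.
case/andP: ratios_in_01 => _ hB.
by rewrite /gamma -mulrNN -invrN divr_gt0 // oppr_gt0 ?A_lt0 // ln_lt0.
Qed.

Lemma delta_sumE (y x : word n) :
  delta p q y x = \sum_i ldelta (gamma p q) (y i) (x i).
Proof.
rewrite /delta /dab !card_setE mulr_sumr -big_split /=; apply: eq_bigr => i _.
by rewrite /ldelta; case: (y i); case: (x i); rewrite /= ?mulr0 ?mulr1 ?addr0 ?add0r.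
Qed.

Lemma wH_sumE (x : word n) : (wH x)%:R = \sum_i (x i)%:R :> R.
Proof. exact: (card_setE R (fun i => x i)). Qed.

Lemma chan_factor (b a : bool) :
  chan p q b a = chan p q b b * expR (A * ldelta (gamma p q) b a).
Proof.
have [_ /lt0r_neq0 hp1 /lt0r_neq0 hq1 _ _] := param_bounds.
have hAgamma : A * gamma p q = B by rewrite /gamma mulrC divfK ?lt_eqF ?A_lt0.
rewrite /chan /ldelta; case: b; case: a; rewrite ?mulr0 ?expR0 ?mulr1 //.
- rewrite hAgamma lnK ?posrE; first by rewrite mulrC divfK.
  by case/andP: ratios_in_01 => _ /andP[].
- rewrite lnK ?posrE; first by rewrite mulrC divfK.
  by case/andP: ratios_in_01 => /andP[].
Qed.

Lemma chan_gt0 (b a : bool) : 0 < chan p q b a.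
Proof. by have [? ? ? _ _] := param_bounds; rewrite /chan; case: a; case: b. Qed.

Lemma Pn_factor (y x : word n) :
  Pn p q y x = Pn p q y y * expR (A * delta p q y x).
Proof.
rewrite delta_sumE mulr_sumr expR_sum /Pn -big_split /=.
by apply: eq_bigr => i _; rewrite -chan_factor.
Qed.

Lemma Pn_lt_of_delta_lt (y x x' : word n) :
  delta p q y x < delta p q y x' -> Pn p q y x' < Pn p q y x.
Proof.
have hPyy : 0 < Pn p q y y by apply: prodr_gt0 => i _; exact: chan_gt0.
move=> hlt; rewrite (Pn_factor y x) (Pn_factor y x') ltr_pM2l //.
by rewrite ltr_expR ltr_nM2l // A_lt0.
Qed.

Lemma delta_triangle (y x x' : word n) :
  delta p q x x' + ((wH y)%:R - (wH x)%:R) * (gamma p q - 1)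
  <= delta p q y x + delta p q y x'.
Proof.
have hg : -1 <= gamma p q by have := gamma_gt0; lra.
rewrite !delta_sumE !wH_sumE -sumrB mulr_suml -!big_split /=.
by apply: ler_sum => i _; exact: ldelta_triangle.
Qed.

End Channel.

Lemma ML_decode_strict_max (R : realType) (p q : R) (n : nat)
    (C : {set word n}) (x y : word n) : x \in C ->
  (forall x', x' \in C -> x' != x -> Pn p q y x' < Pn p q y x) ->
  ML_decode p q C y = Some x.
Proof.
move=> hx hmax.
have hM : ML_maximizers p q C y = [set x].
  apply/setP => z; rewrite !inE.
  have [->|hzx] := eqVneq z x.
    rewrite hx /=; apply/forall_inP => x' hx'.
    have [->|hne] := eqVneq x' x; first exact: lexx.
    exact: ltW (hmax _ hx' hne).
  apply/negbTE; apply/andP => -[hz /forall_inP/(_ x hx)].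
  by rewrite leNgt (hmax _ hz hzx).
rewrite /ML_decode hM cards1 eqxx.
case: pickP => [z|/(_ x)]; last by rewrite inE eqxx.
by rewrite inE => /eqP ->.
Qed.

Theorem mainTheorem7 (R : realType) (p q : R) (n : nat)
  (hn : (2 <= n)%N) (hp : 0 < p) (hpq : p <= q) (hq : q < 1 / 2)
  (C : {set word n}) (hC : (2 <= #|C|)%N) (x y : word n) (hx : x \in C) :
  (delta p q y x < (delta_code p q C
       + ((wH y)%:R - (wH x)%:R) * (gamma p q - 1)) / 2
   \/ delta p q y x < (sdelta_code p q C + (wH y)%:R * (gamma p q - 1)) / 2) ->
  ML_decode p q C y = Some x.
Proof.
move=> hcond; apply: ML_decode_strict_max => // x' hx' hx'x.
apply: Pn_lt_of_delta_lt => //.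
have hxx' : x != x' by rewrite eq_sym.
have htri := delta_triangle hp hpq hq y x x'.
case: hcond => hlt.
- have hmin := minpair_le (@delta R p q n) hx hx' hxx'.
  rewrite /delta_code in hlt; lra.
- have hmin := minpair_le (@sdelta R p q n) hx hx' hxx'.
  rewrite /sdelta_code /sdelta in hlt hmin; rewrite mulrBl in htri; lra.
Qed.
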